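(* For every formula $\varphi$, path $\pi$, avoiding function $\eta$ and $i\in\mathbb{N}$, the sequence $\big((\pi^i\models\mathcal{L}_t\varphi)\big)_{t\in\mathbb{N}}$ is nonincreasing and converges to $(\pi^i\models\mathcal{G}\varphi)$. Moreover, for every $t\in\mathbb{N}$, $$(\pi^i\models\mathcal{G}_t\varphi)\le(\pi^i\models\mathcal{L}_t\varphi)\le(\pi^i\models\mathcal{AG}_t\varphi).$$
   Context: Fix an interpretation of the connectives: a t-norm $\otimes$ and a t-conorm $\oplus$ on $[0,1]$ (commutative, associative binary operations, nondecreasing in each argument, with neutral element $1$ resp. $0$; $\otimes$ continuous), a negation and an implication. An avoiding function is $\eta:\mathbb{Z}\to[0,1]$ with $\eta(k)=1$ for $k\le0$, such that for some $n_\eta\in\mathbb{N}$, $\eta$ is strictly decreasing on $\{0,\dots,n_\eta\}$ and $\eta(k)=0$ for $k\ge n_\eta$. A linear time structure is $(S,s_0,\pi,L)$ with $\pi\in S^\omega$ and fuzzy labeling $L:S\to[0,1]^{AP}$; $\pi^i$ is the suffix from position $i$, and truth degrees $(\pi^i\models\varphi)\in[0,1]$ are defined recursively. $(\pi^i\models\mathcal{G}_t\varphi)=\bigotimes_{j=i}^{i+t}(\pi^j\models\varphi)$, $(\pi^i\models\mathcal{G}\varphi)=\lim_{t\to\infty}(\pi^i\models\mathcal{G}_t\varphi)$. With $I_t=\{0,\dots,t\}$, $(\pi^i\models\mathcal{AG}_t\varphi)=\max_{j\in I_t}\max_{H\subseteq I_t,|H|=t+1-j}\big(\bigotimes_{h\in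 H}(\pi^{i+h}\models\varphi)\big)\cdot\eta(j)$. The ''lasts'' operator is $(\pi^i\models\mathcal{L}_t\varphi)=\max_{0\le j\le\min\{t,n_\eta-1\}}(\pi^i\models\mathcal{G}_{t-j}\varphi)\cdot\eta(j)$; here $\cdot$ is ordinary multiplication. *)

From Stdlib Require Import Reals Lra Lia ZArith List.
Open Scope R_scope.

Definition in01 (x : R) : Prop := 0 <= x <= 1.

(* A t-norm on [0,1] (represented as a function R -> R -> R whose
   behaviour is only constrained on [0,1]). *)
Definition is_tnorm (tn : R -> R -> R) : Prop :=
  (forall x y, in01 x -> in01 y -> in01 (tn x y)) /\
  (forall x y, in01 x -> in01 y -> tn x y = tn y x) /\
  (forall x y z, in01 x -> in01 y -> in01 z -> tn x (tn y z) = tn (tn x y) z) /\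
  (forall x x' y, in01 x -> in01 x' -> in01 y -> x <= x' -> tn x y <= tn x' y) /\
  (forall x y y', in01 x -> in01 y -> in01 y' -> y <= y' -> tn x y <= tn x y') /\
  (forall x, in01 x -> tn x 1 = x) /\
  (forall x y, in01 x -> in01 y -> forall eps, eps > 0 -> exists del, del > 0 /\
     forall x' y', in01 x' -> in01 y' -> Rabs (x' - x) < del -> Rabs (y' - y) < del ->
       Rabs (tn x' y' - tn x y) < eps).

(* Avoiding function eta : Z -> [0,1] with witness n = n_eta. *)
Definition avoiding (eta : Z -> R) (n : nat) : Prop :=
  (forall k, in01 (eta k)) /\
  (forall k, (k <= 0)%Z -> eta k = 1) /\
  (forall a b : nat, (a < b <= n)%nat -> eta (Z.of_nat b) < eta (Z.of_nat a)) /\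
  (forall k, (Z.of_nat n <= k)%Z -> eta k = 0).

(* deg j stands for the truth degree (pi^j |= phi). *)

(* (pi^i |= G_t phi) = tn_{j=i}^{i+t} (pi^j |= phi) *)
Fixpoint Gt (tn : R -> R -> R) (deg : nat -> R) (i t : nat) : R :=
  match t with
  | O => deg i
  | S t' => tn (Gt tn deg i t') (deg (i + S t')%nat)
  end.

Definition tn_list (tn : R -> R -> R) (deg : nat -> R) (i : nat) (H : list nat) : R :=
  fold_right (fun h acc => tn (deg (i + h)%nat) acc) 1 H.

(* all sublists (= all subsets, for a duplicate-free list) *)
Fixpoint sublists (l : list nat) : list (list nat) :=
  match l with
  | nil => nil :: nil
  | x :: r => map (cons x) (sublists r) ++ sublists r
  end.

(* maximum of a nonempty list of nonnegative reals *)
Definition maxl (l : list R) : R := fold_right Rmax 0 l.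

(* (pi^i |= AG_t phi) = max_{j in I_t} max_{H subset I_t, |H| = t+1-j}
                          (tn_{h in H} (pi^{i+h} |= phi)) * eta j *)
Definition AGt (tn : R -> R -> R) (eta : Z -> R) (deg : nat -> R) (i t : nat) : R :=
  maxl (flat_map (fun j =>
          map (fun H => tn_list tn deg i H * eta (Z.of_nat j))
              (filter (fun H => Nat.eqb (length H) (t + 1 - j))
                      (sublists (seq 0 (S t)))))
        (seq 0 (S t))).

(* (pi^i |= L_t phi) = max_{0 <= j <= min(t, n_eta - 1)} (pi^i |= G_{t-j} phi) * eta j *)
Definition Lt (tn : R -> R -> R) (eta : Z -> R) (n : nat) (deg : nat -> R) (i t : nat) : R :=
  maxl (map (fun j => Gt tn deg i (t - j) * eta (Z.of_nat j))
            (seq 0 (S (Nat.min t (n - 1))))).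

From Stdlib Require Import Reals ZArith List Lra Lia.
Open Scope R_scope.

(* Write G(t) for (pi^i |= G_t phi).  A t-norm is bounded by each of its
   arguments, so G is nonincreasing in t and lies in [0,1]; hence it converges
   (this limit is (pi^i |= G phi)).  Since eta j lies in [0,1], eta 0 = 1 and
   j ranges over at most n_eta - 1 values in the definition of L_t, we get
       G(t) <= L(t) <= G(t - (n_eta - 1)),
   so L(t) converges to the same limit by a squeeze argument.  Monotonicity of
   L follows because each term G(t+1-j) eta j with j >= 1 is bounded by the
   term G(t-(j-1)) eta (j-1) of L(t), eta being strictly decreasing.  Finally
   G(t-j) eta j is itself one of the candidates of AG_t: G(t-j) is the t-norm
   over the index set {0,...,t-j}, a prefix of {0,...,t} of size t+1-j. *)

Lemma maxl_ub (l : list R) (x : R) : In x l -> x <= maxl l.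
Proof.
  induction l as [|a l IH]; simpl; [tauto|].
  unfold maxl; simpl; intros [<-|Hx].
  - apply Rmax_l.
  - eapply Rle_trans; [apply IH; exact Hx|apply Rmax_r].
Qed.

Lemma maxl_lub (l : list R) (M : R) :
  0 <= M -> (forall x, In x l -> x <= M) -> maxl l <= M.
Proof.
  induction l as [|a l IH]; intros HM Hl; unfold maxl; simpl; [lra|].
  apply Rmax_lub; [apply Hl; left; reflexivity|].
  apply IH; [exact HM|]. intros x Hx; apply Hl; right; exact Hx.
Qed.

Lemma maxl_ge0 (l : list R) : 0 <= maxl l.
Proof.
  induction l as [|a l IH]; unfold maxl; simpl; [lra|].
  eapply Rle_trans; [apply IH|apply Rmax_r].
Qed.

Lemma nil_in_sublists (l : list nat) : In nil (sublists l).
Proof. induction l; simpl; auto. apply in_or_app; right; assumption. Qed.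

Lemma firstn_in_sublists (l : list nat) (k : nat) : In (firstn k l) (sublists l).
Proof.
  revert k; induction l as [|a l IH]; intros [|k]; simpl; auto.
  - apply in_or_app; right; apply nil_in_sublists.
  - apply in_or_app; left; apply in_map, IH.
Qed.

Lemma firstn_seq (a m k : nat) : (k <= m)%nat -> firstn k (seq a m) = seq a k.
Proof.
  revert a k; induction m as [|m IH]; intros a [|k] Hk; simpl; auto; try lia.
  f_equal; apply IH; lia.
Qed.

Lemma Un_cv_squeeze_shift (u v : nat -> R) (k : nat) (l : R) :
  (forall t, u t <= v t <= u (t - k)%nat) -> Un_cv u l -> Un_cv v l.
Proof.
  intros Hv Hu eps Heps. destruct (Hu eps Heps) as [N HN].
  exists (N + k)%nat; intros t Ht; unfold R_dist in *.
  assert (Hlow := HN t ltac:(lia)). assert (Hhigh := HN (t - k)%nat ltac:(lia)).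
  destruct (Hv t) as [H1 H2].
  apply Rabs_def2 in Hlow; apply Rabs_def2 in Hhigh; apply Rabs_def1; lra.
Qed.

Section TNorm.
Variables (tn : R -> R -> R) (deg : nat -> R).
Hypothesis Htn : is_tnorm tn.
Hypothesis Hdeg : forall j, in01 (deg j).

Lemma tn_in01 x y : in01 x -> in01 y -> in01 (tn x y).
Proof. apply Htn. Qed.

Lemma tn_comm x y : in01 x -> in01 y -> tn x y = tn y x.
Proof. apply Htn. Qed.

Lemma tn_assoc x y z :
  in01 x -> in01 y -> in01 z -> tn x (tn y z) = tn (tn x y) z.
Proof. apply Htn. Qed.

Lemma tn_mono_r x y y' : in01 x -> in01 y -> in01 y' -> y <= y' -> tn x y <= tn x y'.
Proof. apply Htn. Qed.

Lemma tn_unit_r x : in01 x -> tn x 1 = x.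
Proof. apply Htn. Qed.

Lemma one_in01 : in01 1.
Proof. unfold in01; lra. Qed.

Lemma tn_le_l x y : in01 x -> in01 y -> tn x y <= x.
Proof.
  intros Hx Hy. rewrite <- (tn_unit_r x Hx) at 2.
  apply tn_mono_r; auto using one_in01. apply Hy.
Qed.

Lemma Gt_in01 i t : in01 (Gt tn deg i t).
Proof. induction t; simpl; auto using tn_in01. Qed.

Lemma Gt_antitone i k m : (k <= m)%nat -> Gt tn deg i m <= Gt tn deg i k.
Proof.
  induction 1 as [|m _ IH]; [lra|].
  eapply Rle_trans; [|exact IH]. apply tn_le_l; auto using Gt_in01.
Qed.

Lemma Gt_converges i : exists l, Un_cv (fun t => Gt tn deg i t) l.
Proof.
  destruct (decreasing_cv (fun t => Gt tn deg i t)) as [l Hl].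
  - intro t; apply Gt_antitone; lia.
  - exists 0; intros x [k ->]; unfold opp_seq.
    destruct (Gt_in01 i k); lra.
  - exists l; exact Hl.
Qed.

Lemma tn_list_in01 i l : in01 (tn_list tn deg i l).
Proof. induction l; simpl; auto using one_in01, tn_in01. Qed.

Lemma tn_list_snoc i l x :
  tn_list tn deg i (l ++ x :: nil) = tn (tn_list tn deg i l) (deg (i + x)%nat).
Proof.
  induction l as [|a l IH]; simpl.
  - rewrite tn_unit_r, tn_comm, tn_unit_r; auto using one_in01.
  - rewrite IH. apply tn_assoc; auto using tn_list_in01.
Qed.

Lemma tn_list_seq_Gt i m : tn_list tn deg i (seq 0 (S m)) = Gt tn deg i m.
Proof.
  induction m as [|m IH].
  - simpl; rewrite Nat.add_0_r; apply tn_unit_r, Hdeg.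
  - rewrite seq_S, tn_list_snoc, IH; reflexivity.
Qed.

End TNorm.

Section Lasts.
Variables (eta : Z -> R) (n : nat).
Hypothesis Heta : avoiding eta n.

Lemma eta_in01 k : in01 (eta k).
Proof. apply Heta. Qed.

Lemma eta_zero : eta (Z.of_nat 0) = 1.
Proof. apply Heta; lia. Qed.

Lemma eta_decreasing a b : (a < b <= n)%nat -> eta (Z.of_nat b) < eta (Z.of_nat a).
Proof. apply Heta. Qed.

Variables (tn : R -> R -> R) (deg : nat -> R).
Hypothesis Htn : is_tnorm tn.
Hypothesis Hdeg : forall j, in01 (deg j).

Notation G := (Gt tn deg).
Notation L := (Lt tn eta n deg).

Lemma Lt_term_le i t j :
  (j <= Nat.min t (n - 1))%nat -> G i (t - j) * eta (Z.of_nat j) <= L i t.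
Proof.
  intro Hj. apply maxl_ub.
  apply (in_map (fun j => G i (t - j) * eta (Z.of_nat j))), in_seq; lia.
Qed.

Lemma Lt_lub i t M :
  0 <= M ->
  (forall j, (j <= Nat.min t (n - 1))%nat -> G i (t - j) * eta (Z.of_nat j) <= M) ->
  L i t <= M.
Proof.
  intros HM Hterms. apply maxl_lub; [exact HM|].
  intros x Hx; apply in_map_iff in Hx; destruct Hx as [j [<- Hj]].
  apply in_seq in Hj; apply Hterms; lia.
Qed.

(* Lower bound: the term j = 0 of L_t is G_t. *)
Lemma Gt_le_Lt i t : G i t <= L i t.
Proof.
  eapply Rle_trans; [|apply (Lt_term_le i t 0); lia].
  rewrite eta_zero, Nat.sub_0_r; lra.
Qed.

Lemma Lt_le_Gt_shift i t : L i t <= G i (t - (n - 1)).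
Proof.
  apply Lt_lub; [apply (Gt_in01 tn deg Htn Hdeg)|]. intros j Hj.
  destruct (eta_in01 (Z.of_nat j)) as [He0 He1].
  apply Rle_trans with (G i (t - j) * 1).
  - apply Rmult_le_compat_l; [apply (Gt_in01 tn deg Htn Hdeg)|exact He1].
  - rewrite Rmult_1_r; apply (Gt_antitone tn deg Htn Hdeg); lia.
Qed.

(* L_t is nonincreasing: the term j+1 of L_{t+1} is below the term j of L_t. *)
Lemma Lt_antitone_step i t : L i (S t) <= L i t.
Proof.
  apply Lt_lub; [apply maxl_ge0|]. intros [|j] Hj.
  - rewrite eta_zero, Rmult_1_r, Nat.sub_0_r.
    eapply Rle_trans; [apply (Gt_antitone tn deg Htn Hdeg i t); lia|].
    apply Gt_le_Lt.
  - eapply Rle_trans; [|apply (Lt_term_le i t j); lia].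
    replace (S t - S j)%nat with (t - j)%nat by lia.
    apply Rmult_le_compat_l; [apply (Gt_in01 tn deg Htn Hdeg)|].
    left; apply eta_decreasing; lia.
Qed.

(* Each term G_{t-j} * eta j of L_t is a candidate in the maximum AG_t,
   with H = {0,...,t-j}. *)
Lemma Lt_le_AGt i t : L i t <= AGt tn eta deg i t.
Proof.
  apply Lt_lub; [apply maxl_ge0|]. intros j Hj.
  apply maxl_ub, in_flat_map. exists j; split; [apply in_seq; lia|].
  rewrite <- (tn_list_seq_Gt tn deg Htn Hdeg i (t - j)).
  apply (in_map (fun H => tn_list tn deg i H * eta (Z.of_nat j))), filter_In; split.
  - replace (seq 0 (S (t - j))) with (firstn (S (t - j)) (seq 0 (S t))).
    + apply firstn_in_sublists.
    + apply firstn_seq; lia.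
  - rewrite length_seq; apply Nat.eqb_eq; lia.
Qed.

End Lasts.

Theorem proposition9 (tn : R -> R -> R) (eta : Z -> R) (n : nat) (deg : nat -> R) (i : nat)
  (Htn : is_tnorm tn) (Heta : avoiding eta n) (Hdeg : forall j, in01 (deg j)) :
  (forall t, Lt tn eta n deg i (S t) <= Lt tn eta n deg i t) /\
  (exists l, Un_cv (fun t => Gt tn deg i t) l /\ Un_cv (fun t => Lt tn eta n deg i t) l) /\
  (forall t, Gt tn deg i t <= Lt tn eta n deg i t /\ Lt tn eta n deg i t <= AGt tn eta deg i t).
Proof.
  split; [|split].
  - exact (Lt_antitone_step eta n Heta tn deg Htn Hdeg i).
  - destruct (Gt_converges tn deg Htn Hdeg i) as [l Hl].
    exists l; split; [exact Hl|].
    apply (Un_cv_squeeze_shift (fun t => Gt tn deg i t) _ (n - 1) l); [|exact Hl].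
    intro t; split.
    + exact (Gt_le_Lt eta n Heta tn deg i t).
    + exact (Lt_le_Gt_shift eta n Heta tn deg Htn Hdeg i t).
  - intro t; split.
    + exact (Gt_le_Lt eta n Heta tn deg i t).
    + exact (Lt_le_AGt eta n tn deg Htn Hdeg i t).
Qed.
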